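(* Let $t>0$. For every integer $m\geq1$ and every $y\in\mathbb{C}$ with $|y|<1$, the series below converges and $$2^{m+1}\sum_{j\geq m+1}L_{j-m-1}^{(m+1)}(2jt)\,(e^{-t}y)^j=\frac{(K_{2t}(y))^2-1}{t(K_{2t}(y))^2+(2-t)}\,\big[K_{2t}(y)-1\big]^m.$$
   Context: Pochhammer symbol $(a)_0=1$, $(a)_k=a(a+1)\cdots(a+k-1)$. Laguerre polynomials: $L_n^{(a)}(x):=\frac{1}{n!}\sum_{j=0}^n\frac{(-n)_j}{j!}(a+j+1)_{n-j}x^j$. For $t>0$, $\xi_{2t}(Z):=\frac{Z-1}{Z+1}e^{tZ}$. The function $K_{2t}$ on the open unit disc $\mathbb{D}$ is the Herglotz transform $K_{2t}(y)=\int_{\mathbb{T}}\frac{w+y}{w-y}\eta_{2t}(dw)$ of the spectral distribution $\eta_{2t}$ of the free unitary Brownian motion at time $2t$; it is known (Biane) that $K_{2t}(y)=1+2\sum_{n\ge1}\frac1n e^{-nt}L^{(1)}_{n-1}(2nt)y^n$, that $K_{2t}$ extends continuously to $\overline{\mathbb{D}}$, and that $K_{2t}$ is the compositional inverse of the restriction of $\xi_{2t}$ to the Jordan domain $\Gamma_{2t}=\{Z:\Re Z>0,\ \xi_{2t}(Z)\in\mathbb{D}\}$ (component containing $1$), which $\xi_{2t}$ maps bijectively onto $\mathbb{D}$; in particular $\xi_{2t}(K_{2t}(y))=y$, $\Re K_{2t}(y)>0$, $K_{2t}(0)=1$. *)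

From Stdlib Require Import Reals Lra Arith ClassicalEpsilon.
Open Scope R_scope.

Definition Cplx : Type := (R * R)%type.
Definition RtoC (r : R) : Cplx := (r, 0).
Definition Cre (z : Cplx) : R := fst z.
Definition Cim (z : Cplx) : R := snd z.
Definition Cadd (z w : Cplx) : Cplx := (fst z + fst w, snd z + snd w).
Definition Copp (z : Cplx) : Cplx := (- fst z, - snd z).
Definition Csub (z w : Cplx) : Cplx := Cadd z (Copp w).
Definition Cmul (z w : Cplx) : Cplx :=
  (fst z * fst w - snd z * snd w, fst z * snd w + snd z * fst w).
Definition Cinv (z : Cplx) : Cplx :=
  (fst z / (fst z ^ 2 + snd z ^ 2), - snd z / (fst z ^ 2 + snd z ^ 2)).
Definition Cdiv (z w : Cplx) : Cplx := Cmul z (Cinv w).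
Definition Cscal (r : R) (z : Cplx) : Cplx := (r * fst z, r * snd z).
Fixpoint Cpow (z : Cplx) (n : nat) : Cplx :=
  match n with O => RtoC 1 | S k => Cmul z (Cpow z k) end.
Definition Cmod (z : Cplx) : R := sqrt (fst z ^ 2 + snd z ^ 2).

Fixpoint Csum (a : nat -> Cplx) (N : nat) : Cplx :=
  match N with O => a O | S k => Cadd (Csum a k) (a (S k)) end.

Definition Cseries_cv (a : nat -> Cplx) (S : Cplx) : Prop :=
  Un_cv (fun N => fst (Csum a N)) (fst S) /\ Un_cv (fun N => snd (Csum a N)) (snd S).

Fixpoint poch (a : R) (k : nat) : R :=
  match k with O => 1 | S i => poch a i * (a + INR i) end.

Definition Laguerre (n : nat) (a x : R) : R :=
  / INR (fact n) *
  sum_f_R0 (fun j => poch (- INR n) j / INR (fact j)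
                     * poch (a + INR j + 1) (n - j) * x ^ j) n.

(* n-th coefficient term of K_{2t}(y) = 1 + 2 sum_{n>=1} (1/n) e^{-nt} L^{(1)}_{n-1}(2nt) y^n *)
Definition Kterm (t : R) (y : Cplx) (n : nat) : Cplx :=
  match n with
  | O => RtoC 1
  | S k => Cscal (2 / INR n * exp (- INR n * t) * Laguerre k 1 (2 * INR n * t)) (Cpow y n)
  end.

Definition K2t (t : R) (y : Cplx) : Cplx :=
  epsilon (inhabits (RtoC 0)) (fun S => Cseries_cv (Kterm t y) S).

(* Write [K_2t(y) = 1 + V(y)].  Since [ξ_2t(K_2t(y)) = y], [V] solves [V = y φ(V)] with
   [φ(x) = (2 + x) e^(-t(1+x))], so Lagrange inversion gives [[y^n] V^p = (p/n) [x^(n-p)] φ^n],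
   and [[x^(n-p)] φ^n = 2^p e^(-nt) L_(n-p)^(p)(2nt)]; for [p = 1] this is Biane's expansion
   of [K_2t].  Hence [2^(m+1)] times the series of the
   theorem is [L(y) = Σ_n [x^(n-m-1)] φ^n y^n = θ(V^(m+1))/(m+1)], [θ = y d/dy].  The recurrence
   satisfied by the coefficients of [φ^n], which comes from [(2 + x) φ' = (1 - t(2 + x)) φ],
   turns into the formal identity [(2 + 2tV + tV^2) L = (2V + V^2) V^m], i.e. the claimed formula.
   All of this is done with formal power series, which are then evaluated at [y]: they converge
   on the unit disc because [|[x^k] φ^j| <= r^(j-k)] for [r = sqrt(2/t)], by Cauchy's estimate on
   the circle [|z| = r], where [|φ(z)| <= r]; the factor [e^(-tjx)] of [φ^j] is reached as the
   limit of the polynomials [(1 - tjx/M)^M]. *)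

From Pilot Require Import Defs.
From Stdlib Require Import Reals Lra Lia Arith FunctionalExtensionality ClassicalEpsilon.
From Coquelicot Require Import Coquelicot.
Open Scope R_scope.

Lemma sum_mult_l (c : R) (f : nat -> R) n :
  sum_f_R0 (fun i => c * f i) n = c * sum_f_R0 f n.
Proof. induction n; simpl; [ring | rewrite IHn; ring]. Qed.

Lemma sum_mult_r (c : R) (f : nat -> R) n :
  sum_f_R0 (fun i => f i * c) n = sum_f_R0 f n * c.
Proof. induction n; simpl; [ring | rewrite IHn; ring]. Qed.

Lemma sum_opp (f : nat -> R) n : sum_f_R0 (fun i => - f i) n = - sum_f_R0 f n.
Proof. induction n; simpl; [ring | rewrite IHn; ring]. Qed.

Lemma sum_succ_l (f : nat -> R) n :
  sum_f_R0 f (S n) = f 0%nat + sum_f_R0 (fun i => f (S i)) n.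
Proof. induction n; simpl in *; [ring | rewrite IHn; ring]. Qed.

Lemma sum_rev (f : nat -> R) n : sum_f_R0 f n = sum_f_R0 (fun i => f (n - i)%nat) n.
Proof.
  revert f; induction n as [|n IH]; intro f; [reflexivity|].
  rewrite sum_succ_l, (IH (fun i => f (S i))), tech5, Rplus_comm.
  f_equal; [apply sum_eq; intros i Hi|]; f_equal; lia.
Qed.

Lemma sum_triangle (g : nat -> nat -> R) n :
  sum_f_R0 (fun l => sum_f_R0 (fun i => g l i) l) n =
  sum_f_R0 (fun i => sum_f_R0 (fun s => g (i + s)%nat i) (n - i)) n.
Proof.
  induction n as [|n IH]; [reflexivity|].
  rewrite !tech5, IH, Nat.sub_diag; simpl (sum_f_R0 _ 0); rewrite Nat.add_0_r.
  rewrite <- !Rplus_assoc, <- sum_plus; f_equal.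
  apply sum_eq; intros i Hi.
  replace (S n - i)%nat with (S (n - i)) by lia; simpl; f_equal; f_equal; lia.
Qed.

Lemma sum_swap (g : nat -> nat -> R) n m :
  sum_f_R0 (fun i => sum_f_R0 (fun j => g i j) m) n =
  sum_f_R0 (fun j => sum_f_R0 (fun i => g i j) n) m.
Proof. induction n; simpl; [reflexivity | rewrite IHn, <- sum_plus; reflexivity]. Qed.

Lemma sum_widen (f : nat -> R) n m :
  (n <= m)%nat -> (forall i, (n < i <= m)%nat -> f i = 0) ->
  sum_f_R0 f m = sum_f_R0 f n.
Proof.
  intros Hnm Hz; induction m as [|m IH].
  - replace n with 0%nat by lia; reflexivity.
  - destruct (Nat.eq_dec n (S m)) as [->|Hne]; [reflexivity|].
    simpl; rewrite IH, Hz by (lia || (intros; apply Hz; lia)); ring.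
Qed.

Lemma sum_single (f : nat -> R) n k :
  (k <= n)%nat -> (forall i, (i <= n)%nat -> i <> k -> f i = 0) ->
  sum_f_R0 f n = f k.
Proof.
  intros Hk Hz.
  rewrite (sum_widen f k n Hk) by (intros; apply Hz; lia).
  destruct k as [|k]; [reflexivity|].
  rewrite tech5, sum_eq_R0 by (intros; apply Hz; lia); ring.
Qed.

(** * Formal power series *)

Definition fps := nat -> R.

Definition fps_mul (a b : fps) : fps :=
  fun n => sum_f_R0 (fun k => a k * b (n - k)%nat) n.
Definition fps_one : fps := fun n => match n with O => 1 | _ => 0 end.
Definition fps_zero : fps := fun _ => 0.
Definition fps_add (a b : fps) : fps := fun n => a n + b n.
Definition fps_scal (c : R) (a : fps) : fps := fun n => c * a n.
Definition fps_xmul (a : fps) : fps := fun n => match n with O => 0 | S k => a k end.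
Fixpoint fps_pow (a : fps) (k : nat) : fps :=
  match k with O => fps_one | S k => fps_mul a (fps_pow a k) end.
Definition fps_theta (a : fps) : fps := fun n => INR n * a n.
Fixpoint fps_xpow (k : nat) (a : fps) : fps :=
  match k with O => a | S k => fps_xmul (fps_xpow k a) end.
Definition fps_X : fps := fps_xmul fps_one.

Ltac fps_ext := let n := fresh "n" in apply functional_extensionality; intro n.

Lemma fps_mul_comm a b : fps_mul a b = fps_mul b a.
Proof.
  fps_ext; unfold fps_mul; rewrite sum_rev; apply sum_eq; intros i Hi.
  rewrite Nat.sub_sub_distr, Nat.sub_diag by lia; simpl; ring.
Qed.

Lemma fps_mul_assoc a b c : fps_mul (fps_mul a b) c = fps_mul a (fps_mul b c).
Proof.
  fps_ext; unfold fps_mul.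
  transitivity (sum_f_R0 (fun l =>
    sum_f_R0 (fun i => a i * b (l - i)%nat * c (n - l)%nat) l) n).
  { apply sum_eq; intros; rewrite <- sum_mult_r; reflexivity. }
  rewrite sum_triangle; apply sum_eq; intros i Hi.
  rewrite <- sum_mult_l; apply sum_eq; intros s Hs.
  replace (i + s - i)%nat with s by lia.
  replace (n - (i + s))%nat with (n - i - s)%nat by lia; ring.
Qed.

Lemma fps_mul_add_l a b c :
  fps_mul (fps_add a b) c = fps_add (fps_mul a c) (fps_mul b c).
Proof. fps_ext; unfold fps_mul, fps_add; rewrite <- sum_plus; apply sum_eq; intros; ring. Qed.

Lemma fps_mul_add_r a b c :
  fps_mul c (fps_add a b) = fps_add (fps_mul c a) (fps_mul c b).
Proof. rewrite !(fps_mul_comm c); apply fps_mul_add_l. Qed.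

Lemma fps_mul_scal_l k a b : fps_mul (fps_scal k a) b = fps_scal k (fps_mul a b).
Proof. fps_ext; unfold fps_mul, fps_scal; rewrite <- sum_mult_l; apply sum_eq; intros; ring. Qed.

Lemma fps_mul_scal_r k a b : fps_mul a (fps_scal k b) = fps_scal k (fps_mul a b).
Proof. rewrite !(fps_mul_comm a); apply fps_mul_scal_l. Qed.

Lemma fps_mul_one_l a : fps_mul fps_one a = a.
Proof.
  fps_ext; unfold fps_mul; rewrite (sum_single _ _ 0) by
    (lia || (intros [|i] Hi Hne; [lia | simpl; ring])).
  simpl; rewrite Nat.sub_0_r; ring.
Qed.

Lemma fps_mul_one_r a : fps_mul a fps_one = a.
Proof. rewrite fps_mul_comm; apply fps_mul_one_l. Qed.

Lemma fps_mul_zero_l a : fps_mul fps_zero a = fps_zero.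
Proof. fps_ext; unfold fps_mul, fps_zero; apply sum_eq_R0; intros; ring. Qed.

Lemma fps_mul_zero_r a : fps_mul a fps_zero = fps_zero.
Proof. rewrite fps_mul_comm; apply fps_mul_zero_l. Qed.

Lemma fps_mul_xmul_l a b : fps_mul (fps_xmul a) b = fps_xmul (fps_mul a b).
Proof.
  fps_ext; unfold fps_mul; destruct n as [|n]; [simpl; ring|].
  rewrite sum_succ_l; simpl; rewrite Rmult_0_l, Rplus_0_l; reflexivity.
Qed.

Lemma fps_mul_xmul_r a b : fps_mul a (fps_xmul b) = fps_xmul (fps_mul a b).
Proof. rewrite !(fps_mul_comm a); apply fps_mul_xmul_l. Qed.

Lemma fps_mul_coef_ext a a' b n :
  (forall i, (i <= n)%nat -> a i = a' i) -> fps_mul a b n = fps_mul a' b n.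
Proof. intros H; unfold fps_mul; apply sum_eq; intros; rewrite H by lia; reflexivity. Qed.

Lemma fps_theta_mul a b :
  fps_theta (fps_mul a b) = fps_add (fps_mul (fps_theta a) b) (fps_mul a (fps_theta b)).
Proof.
  fps_ext; unfold fps_theta, fps_mul, fps_add.
  rewrite <- sum_plus, <- sum_mult_l; apply sum_eq; intros i Hi.
  rewrite minus_INR by lia; ring.
Qed.

Lemma fps_theta_add a b : fps_theta (fps_add a b) = fps_add (fps_theta a) (fps_theta b).
Proof. fps_ext; unfold fps_theta, fps_add; ring. Qed.

Lemma fps_theta_scal k a : fps_theta (fps_scal k a) = fps_scal k (fps_theta a).
Proof. fps_ext; unfold fps_theta, fps_scal; ring. Qed.

Lemma fps_theta_one : fps_theta fps_one = fps_zero.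
Proof. fps_ext; unfold fps_theta, fps_one, fps_zero; destruct n; simpl; ring. Qed.

Lemma fps_theta_xmul a : fps_theta (fps_xmul a) = fps_xmul (fps_add (fps_theta a) a).
Proof. fps_ext; unfold fps_theta, fps_xmul, fps_add; destruct n; [simpl | rewrite S_INR]; ring. Qed.

Lemma fps_pow_add a i j : fps_pow a (i + j) = fps_mul (fps_pow a i) (fps_pow a j).
Proof.
  induction i as [|i IH]; simpl; [rewrite fps_mul_one_l | rewrite IH, fps_mul_assoc]; reflexivity.
Qed.

Lemma fps_pow_mul a b k : fps_pow (fps_mul a b) k = fps_mul (fps_pow a k) (fps_pow b k).
Proof.
  induction k as [|k IH]; simpl; [rewrite fps_mul_one_l; reflexivity|].
  rewrite IH, !fps_mul_assoc; f_equal.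
  rewrite <- !fps_mul_assoc; f_equal; apply fps_mul_comm.
Qed.

Lemma fps_pow_one k : fps_pow fps_one k = fps_one.
Proof. induction k; simpl; [|rewrite IHk, fps_mul_one_l]; reflexivity. Qed.

Lemma fps_theta_pow a k :
  fps_theta (fps_pow a (S k)) = fps_scal (INR (S k)) (fps_mul (fps_pow a k) (fps_theta a)).
Proof.
  induction k as [|k IH].
  - simpl; rewrite fps_theta_mul, fps_theta_one, fps_mul_zero_r, fps_mul_one_r, fps_mul_one_l.
    fps_ext; unfold fps_add, fps_scal, fps_zero; ring.
  - change (fps_pow a (S (S k))) with (fps_mul a (fps_pow a (S k))).
    rewrite fps_theta_mul, IH, fps_mul_scal_r, <- fps_mul_assoc, (fps_mul_comm (fps_theta a)).
    change (fps_mul a (fps_pow a k)) with (fps_pow a (S k)).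
    fps_ext; unfold fps_add, fps_scal; rewrite (S_INR (S k)); ring.
Qed.

Lemma fps_xpow_coef k a n : fps_xpow k a n = if Nat.leb k n then a (n - k)%nat else 0.
Proof.
  revert n; induction k as [|k IH]; intro n; simpl; [rewrite Nat.sub_0_r; reflexivity|].
  unfold fps_xmul; destruct n; [|rewrite IH]; reflexivity.
Qed.

Lemma fps_mul_xpow_l k a b : fps_mul (fps_xpow k a) b = fps_xpow k (fps_mul a b).
Proof. induction k; simpl; [|rewrite fps_mul_xmul_l, IHk]; reflexivity. Qed.

Lemma fps_mul_xpow_r k a b : fps_mul a (fps_xpow k b) = fps_xpow k (fps_mul a b).
Proof. rewrite !(fps_mul_comm a); apply fps_mul_xpow_l. Qed.

Lemma fps_pow_xmul a k : fps_pow (fps_xmul a) k = fps_xpow k (fps_pow a k).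
Proof.
  induction k; simpl; [|rewrite fps_mul_xmul_l, IHk, fps_mul_xpow_r]; reflexivity.
Qed.

Lemma fps_pow_X k : fps_pow fps_X k = fps_xpow k fps_one.
Proof. unfold fps_X; rewrite fps_pow_xmul, fps_pow_one; reflexivity. Qed.

Lemma fps_pow_coef0 a k : fps_pow a k 0%nat = a 0%nat ^ k.
Proof. induction k; simpl; [|unfold fps_mul; simpl; rewrite IHk; ring]; reflexivity. Qed.

Lemma fps_xmul_tail a : a 0%nat = 0 -> fps_xmul (fun n => a (S n)) = a.
Proof. intro H; fps_ext; destruct n; simpl; auto. Qed.

Lemma fps_pow_coef_lt F j n : F 0%nat = 0 -> (n < j)%nat -> fps_pow F j n = 0.
Proof.
  intros H0 Hn; rewrite <- (fps_xmul_tail F H0), fps_pow_xmul, fps_xpow_coef.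
  destruct (Nat.leb_spec j n); [lia | reflexivity].
Qed.

Lemma fps_pow_coef_diag F n : F 0%nat = 0 -> fps_pow F n n = F 1%nat ^ n.
Proof.
  intros H0; rewrite <- (fps_xmul_tail F H0) at 1.
  rewrite fps_pow_xmul, fps_xpow_coef, Nat.leb_refl, Nat.sub_diag, fps_pow_coef0; reflexivity.
Qed.

(** * Lagrange inversion *)

Section CausalRecursion.

Variable step : fps -> nat -> R.
Hypothesis step_causal :
  forall g h n, (forall i, (i < n)%nat -> g i = h i) -> step g n = step h n.

Fixpoint causal_approx (k : nat) : fps :=
  match k with O => fun _ => 0 | S k => step (causal_approx k) end.

Definition causal_fix : fps := fun n => causal_approx (S n) n.

Lemma causal_approx_stable n k : (n < k)%nat -> causal_approx k n = causal_fix n.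
Proof.
  revert k; induction n as [n IH] using (well_founded_induction Wf_nat.lt_wf).
  intros [|k] Hk; [lia|]; unfold causal_fix; simpl.
  apply step_causal; intros i Hi; rewrite !IH by lia; reflexivity.
Qed.

Lemma causal_fix_eq n : causal_fix n = step causal_fix n.
Proof. apply step_causal; intros i Hi; apply causal_approx_stable; lia. Qed.

End CausalRecursion.

Lemma fps_inv_exists (phi : fps) : phi 0%nat <> 0 -> exists psi, fps_mul phi psi = fps_one.
Proof.
  intro H0.
  set (step := fun (g : fps) (n : nat) => match n with
    | O => / phi 0%nat
    | S n' => - / phi 0%nat * sum_f_R0 (fun i => phi (S i) * g (n' - i)%nat) n' end).
  assert (Hc : forall g h n, (forall i, (i < n)%nat -> g i = h i) -> step g n = step h n).
  { intros g h [|n] Hgh; [reflexivity|]; simpl; f_equal.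
    apply sum_eq; intros i Hi; rewrite Hgh by lia; reflexivity. }
  exists (causal_fix step); fps_ext; unfold fps_mul.
  destruct n as [|n].
  - simpl; rewrite causal_fix_eq by exact Hc; simpl; field; exact H0.
  - rewrite sum_succ_l, Nat.sub_0_r, (causal_fix_eq step Hc (S n)); simpl.
    field; exact H0.
Qed.

Definition fps_comp (p F : fps) : fps :=
  fun n => sum_f_R0 (fun j => p j * fps_pow F j n) n.

Section Composition.

Variable F : fps.
Hypothesis F0 : F 0%nat = 0.

Lemma fps_comp_coef_widen (p : fps) n m : (n <= m)%nat ->
  sum_f_R0 (fun j => p j * fps_pow F j n) m = fps_comp p F n.
Proof. intro H; apply sum_widen; [lia | intros; rewrite fps_pow_coef_lt by (auto || lia); ring]. Qed.

Lemma fps_comp_mul a b : fps_comp (fps_mul a b) F = fps_mul (fps_comp a F) (fps_comp b F).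
Proof.
  fps_ext; unfold fps_comp, fps_mul.
  transitivity (sum_f_R0 (fun i => sum_f_R0 (fun s =>
    a i * b s * fps_pow F (i + s) n) n) n).
  - transitivity (sum_f_R0 (fun l => sum_f_R0 (fun i =>
      a i * b (l - i)%nat * fps_pow F l n) l) n).
    { apply sum_eq; intros; rewrite <- sum_mult_r; reflexivity. }
    rewrite sum_triangle; apply sum_eq; intros i Hi.
    rewrite (sum_widen _ (n - i) n) by
      (lia || (intros; rewrite fps_pow_coef_lt by (auto || lia); ring)).
    apply sum_eq; intros s Hs; replace (i + s - i)%nat with s by lia; reflexivity.
  - transitivity (sum_f_R0 (fun l => sum_f_R0 (fun i => sum_f_R0 (fun s =>
      a i * b s * (fps_pow F i l * fps_pow F s (n - l)%nat)) n) n) n).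
    + symmetry; rewrite sum_swap; apply sum_eq; intros i Hi.
      rewrite sum_swap; apply sum_eq; intros s Hs.
      rewrite fps_pow_add, sum_mult_l; reflexivity.
    + apply sum_eq; intros l Hl.
      change (sum_f_R0 (fun j => a j * fps_pow F j l) l) with (fps_comp a F l).
      change (sum_f_R0 (fun j => b j * fps_pow F j (n - l)%nat) (n - l)) with (fps_comp b F (n - l)%nat).
      rewrite <- (fps_comp_coef_widen a l n), <- (fps_comp_coef_widen b (n - l) n) by lia.
      rewrite <- sum_mult_r; apply sum_eq; intros i Hi.
      rewrite <- sum_mult_l; apply sum_eq; intros s Hs; ring.
Qed.

Lemma fps_comp_one : fps_comp fps_one F = fps_one.
Proof.
  fps_ext; unfold fps_comp; rewrite (sum_single _ _ 0) by
    (lia || (intros [|i] Hi Hne; [lia | simpl; ring])).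
  simpl; ring.
Qed.

Lemma fps_comp_pow a k : fps_comp (fps_pow a k) F = fps_pow (fps_comp a F) k.
Proof.
  induction k; simpl; [apply fps_comp_one | rewrite fps_comp_mul, IHk; reflexivity].
Qed.

Lemma fps_comp_inverse_exists : F 1%nat <> 0 -> exists V, fps_comp V F = fps_X.
Proof.
  intro H1.
  set (step := fun (g : fps) (n : nat) => match n with
    | O => 0
    | S n' => (fps_X n - sum_f_R0 (fun j => g j * fps_pow F j n) n') / F 1%nat ^ n end).
  assert (Hc : forall g h n, (forall i, (i < n)%nat -> g i = h i) -> step g n = step h n).
  { intros g h [|n] Hgh; [reflexivity|]; unfold step; do 2 f_equal.
    apply sum_eq; intros i Hi; rewrite Hgh by lia; reflexivity. }
  exists (causal_fix step); fps_ext; unfold fps_comp.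
  destruct n as [|n].
  - simpl; rewrite causal_fix_eq by exact Hc; simpl; ring.
  - rewrite tech5, (causal_fix_eq step Hc (S n)), fps_pow_coef_diag by exact F0.
    simpl step; change (fps_X (S n)) with (fps_one n); simpl pow.
    field; split; [apply pow_nonzero|]; exact H1.
Qed.

Lemma fps_mul_theta_comp_coef p G n :
  fps_mul (fps_theta (fps_comp p F)) G n =
  sum_f_R0 (fun j => p j * fps_mul (fps_theta (fps_pow F j)) G n) n.
Proof.
  transitivity (fps_mul (fun i => sum_f_R0 (fun j => p j * fps_theta (fps_pow F j) i) n) G n).
  - apply fps_mul_coef_ext; intros i Hi; unfold fps_theta.
    rewrite <- (fps_comp_coef_widen p i n Hi), <- sum_mult_l.
    apply sum_eq; intros; ring.
  - unfold fps_mul.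
    transitivity (sum_f_R0 (fun i => sum_f_R0 (fun j =>
      p j * fps_theta (fps_pow F j) i * G (n - i)%nat) n) n).
    + apply sum_eq; intros; rewrite <- sum_mult_r; reflexivity.
    + rewrite sum_swap; apply sum_eq; intros.
      rewrite <- sum_mult_l; apply sum_eq; intros; ring.
Qed.

End Composition.

Lemma fps_theta_xpow_one k : fps_theta (fps_xpow k fps_one) = fps_scal (INR k) (fps_xpow k fps_one).
Proof.
  fps_ext; unfold fps_theta, fps_scal; rewrite fps_xpow_coef.
  destruct (Nat.leb_spec k n); [|ring].
  destruct (Nat.eq_dec n k) as [->|Hne]; [reflexivity|].
  unfold fps_one; destruct (n - k)%nat eqn:E; [lia | ring].
Qed.

Section LagrangeInversion.

Variables phi psi : fps.
Hypothesis phi_psi : fps_mul phi psi = fps_one.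

Lemma fps_pow_inv k : fps_mul (fps_pow psi k) (fps_pow phi k) = fps_one.
Proof. rewrite <- fps_pow_mul, fps_mul_comm, phi_psi; apply fps_pow_one. Qed.

Lemma fps_mul_inv_pow r : fps_mul psi (fps_pow phi (S r)) = fps_pow phi r.
Proof. simpl; rewrite <- fps_mul_assoc, (fps_mul_comm psi), phi_psi; apply fps_mul_one_l. Qed.

Lemma fps_mul_theta_inv :
  fps_mul phi (fps_theta psi) = fps_scal (-1) (fps_mul (fps_theta phi) psi).
Proof.
  assert (E := fps_theta_mul phi psi); rewrite phi_psi, fps_theta_one in E.
  fps_ext; apply (f_equal (fun s => s n)) in E.
  unfold fps_add, fps_zero in E; unfold fps_scal; lra.
Qed.

(* The coefficient is the residue of [F'/F^(r+1)] for [F = x ψ = x/φ], hence [0] unless [r = 0]. *)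
Lemma fps_residue_coef r :
  fps_mul (fps_add (fps_theta psi) psi) (fps_pow phi (S r)) r = fps_one r.
Proof.
  rewrite fps_mul_add_l; unfold fps_add; rewrite fps_mul_inv_pow.
  destruct r as [|r]; [unfold fps_mul, fps_theta; simpl; ring|].
  assert (Htheta : fps_mul (fps_theta psi) (fps_pow phi (S (S r))) =
                   fps_scal (-1) (fps_mul (fps_theta phi) (fps_pow phi r))).
  { change (fps_pow phi (S (S r))) with (fps_mul phi (fps_mul phi (fps_pow phi r))).
    rewrite <- fps_mul_assoc, (fps_mul_comm (fps_theta psi)), fps_mul_theta_inv.
    rewrite fps_mul_scal_l, fps_mul_assoc, <- (fps_mul_assoc psi), (fps_mul_comm psi), phi_psi.
    rewrite fps_mul_one_l; reflexivity. }
  assert (Hpow : INR (S r) * fps_pow phi (S r) (S r) =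
                 INR (S r) * fps_mul (fps_pow phi r) (fps_theta phi) (S r))
    by exact (f_equal (fun s => s (S r)) (fps_theta_pow phi r)).
  rewrite Htheta, (fps_mul_comm (fps_theta phi)); unfold fps_scal, fps_one.
  assert (INR (S r) <> 0) by (apply not_0_INR; lia).
  apply (Rmult_eq_reg_l (INR (S r))); [|assumption].
  rewrite Rmult_plus_distr_l, Hpow; ring.
Qed.

Lemma fps_mul_theta_pow_coef j n : (j <= n)%nat ->
  fps_mul (fps_theta (fps_pow (fps_xmul psi) j)) (fps_pow phi n) n = INR j * fps_one (n - j)%nat.
Proof.
  intro Hjn; destruct j as [|j].
  - simpl; rewrite fps_theta_one, fps_mul_zero_l; unfold fps_zero; ring.
  - rewrite fps_theta_pow, fps_mul_scal_l, fps_pow_xmul, fps_theta_xmul.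
    rewrite fps_mul_xpow_l, fps_mul_xmul_r, fps_mul_xpow_l, fps_mul_xmul_l.
    unfold fps_scal; f_equal; rewrite fps_xpow_coef.
    destruct (Nat.leb_spec j n) as [_|]; [|lia].
    replace (n - j)%nat with (S (n - S j)) by lia; simpl fps_xmul.
    replace (fps_pow phi n) with (fps_pow phi (j + S (n - S j))) by (f_equal; lia).
    rewrite fps_pow_add, (fps_mul_comm (fps_pow psi j)), fps_mul_assoc.
    rewrite <- (fps_mul_assoc (fps_pow psi j)), fps_pow_inv, fps_mul_one_l.
    apply fps_residue_coef.
Qed.

End LagrangeInversion.

Theorem lagrange_inversion (phi : fps) : phi 0%nat <> 0 ->
  exists V, V 0%nat = 0 /\ forall k n, (k <= n)%nat ->
    INR n * fps_pow V k n = INR k * fps_pow phi n (n - k)%nat.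
Proof.
  intro Hphi0; destruct (fps_inv_exists phi Hphi0) as [psi Hpsi].
  set (F := fps_xmul psi); assert (F0 : F 0%nat = 0) by reflexivity.
  assert (F1 : F 1%nat <> 0).
  { intro E; apply (f_equal (fun s => s 0%nat)) in Hpsi.
    unfold fps_mul, fps_one in Hpsi; simpl in Hpsi, E; rewrite E in Hpsi; lra. }
  destruct (fps_comp_inverse_exists F F0 F1) as [V HV]; exists V; split.
  { apply (f_equal (fun s => s 0%nat)) in HV; unfold fps_comp, fps_X in HV; simpl in HV.
    rewrite Rmult_1_r in HV; exact HV. }
  intros k n Hkn.
  assert (Hcomp : fps_comp (fps_pow V k) F = fps_xpow k fps_one)
    by (rewrite fps_comp_pow, HV, fps_pow_X by exact F0; reflexivity).
  assert (E := fps_mul_theta_comp_coef F F0 (fps_pow V k) (fps_pow phi n) n).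
  rewrite Hcomp, fps_theta_xpow_one, fps_mul_scal_l, fps_mul_xpow_l in E.
  unfold fps_scal in E; rewrite fps_xpow_coef, fps_mul_one_l in E.
  destruct (Nat.leb_spec k n) as [_|]; [|lia].
  rewrite E, (sum_single _ _ n) by (lia || (intros j Hj Hne;
    rewrite (fps_mul_theta_pow_coef phi psi Hpsi) by lia; unfold fps_one;
    destruct (n - j)%nat eqn:?; [lia | ring])).
  rewrite (fps_mul_theta_pow_coef phi psi Hpsi) by lia.
  rewrite Nat.sub_diag; simpl fps_one; ring.
Qed.

(** * The series [φ] and Laguerre polynomials *)

Definition fps_lin (a b : R) : fps := fun n => match n with O => a | 1%nat => b | _ => 0 end.
Definition fps_exp (c : R) : fps := fun n => c ^ n / INR (fact n).
Definition binom (M i : nat) : R := if Nat.leb i M then Binomial.C M i else 0.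

Lemma INR_fact_neq_0 n : INR (fact n) <> 0.
Proof. apply not_0_INR, fact_neq_0. Qed.

Lemma binom_0 M : binom M 0 = 1.
Proof. unfold binom, Binomial.C; simpl; rewrite Nat.sub_0_r; field; apply INR_fact_neq_0. Qed.

Lemma binom_gt M i : (M < i)%nat -> binom M i = 0.
Proof. intro H; unfold binom; destruct (Nat.leb_spec i M); [lia | reflexivity]. Qed.

Lemma binom_diag M : binom M M = 1.
Proof.
  unfold binom, Binomial.C; rewrite Nat.leb_refl, Nat.sub_diag; simpl.
  field; apply INR_fact_neq_0.
Qed.

Lemma binom_pascal M i : binom (S M) (S i) = binom M i + binom M (S i).
Proof.
  destruct (lt_eq_lt_dec i M) as [[Hlt | ->] | Hgt].
  - unfold binom; rewrite !(proj2 (Nat.leb_le _ _)) by lia; rewrite Binomial.pascal by lia; reflexivity.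
  - rewrite !binom_diag, binom_gt by lia; ring.
  - rewrite !binom_gt by lia; ring.
Qed.

Lemma fps_mul_lin a b c : fps_mul (fps_lin a b) c = fps_add (fps_scal a c) (fps_scal b (fps_xmul c)).
Proof.
  fps_ext; unfold fps_mul, fps_add, fps_scal, fps_xmul.
  destruct n as [|[|n]]; [simpl; ring | simpl; ring|].
  rewrite !sum_succ_l, sum_eq_R0 by (intros; simpl; ring); simpl; ring.
Qed.

Lemma fps_pow_lin a b M i : fps_pow (fps_lin a b) M i = binom M i * a ^ (M - i) * b ^ i.
Proof.
  revert i; induction M as [|M IH]; intro i.
  - destruct i; simpl; [rewrite binom_0 | rewrite binom_gt by lia]; simpl; ring.
  - simpl fps_pow; rewrite fps_mul_lin; unfold fps_add, fps_scal, fps_xmul.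
    destruct i as [|i].
    + rewrite IH, !binom_0, Nat.sub_0_r; simpl; ring.
    + rewrite !IH, binom_pascal.
      destruct (le_lt_dec (S i) M).
      * replace (S M - S i)%nat with (M - i)%nat by lia.
        replace (M - i)%nat with (S (M - S i)) by lia; simpl; ring.
      * rewrite (binom_gt M (S i)) by lia.
        destruct (Nat.eq_dec i M) as [->|]; [|rewrite binom_gt by lia].
        -- rewrite !Nat.sub_diag; simpl; ring.
        -- ring.
Qed.

Lemma fps_exp_mul c d : fps_mul (fps_exp c) (fps_exp d) = fps_exp (c + d).
Proof.
  fps_ext; unfold fps_mul, fps_exp; rewrite binomial; unfold Rdiv; rewrite <- sum_mult_r.
  apply sum_eq; intros i Hi; unfold Binomial.C.
  field; repeat split; apply INR_fact_neq_0.
Qed.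

Lemma fps_exp_0 : fps_exp 0 = fps_one.
Proof. fps_ext; unfold fps_exp, fps_one; destruct n; simpl; [field | unfold Rdiv; ring]. Qed.

Lemma fps_pow_exp c j : fps_pow (fps_exp c) j = fps_exp (INR j * c).
Proof.
  induction j as [|j IH]; simpl fps_pow; [rewrite Rmult_0_l, fps_exp_0; reflexivity|].
  rewrite IH, fps_exp_mul, S_INR; f_equal; ring.
Qed.

Lemma fps_pow_scal s a j : fps_pow (fps_scal s a) j = fps_scal (s ^ j) (fps_pow a j).
Proof.
  induction j as [|j IH]; [fps_ext; unfold fps_scal; simpl; ring|].
  simpl fps_pow; rewrite IH, fps_mul_scal_l, fps_mul_scal_r; fps_ext; unfold fps_scal; simpl; ring.
Qed.

Lemma exp_pow_INR x j : exp x ^ j = exp (INR j * x).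
Proof.
  induction j as [|j IH]; simpl pow; [rewrite Rmult_0_l, exp_0; reflexivity|].
  rewrite IH, S_INR, <- exp_plus; f_equal; ring.
Qed.

Lemma poch_opp_INR n b : (b <= n)%nat ->
  poch (- INR n) b * INR (fact (n - b)) = (-1) ^ b * INR (fact n).
Proof.
  induction b as [|b IH]; intro Hb; [simpl; rewrite Nat.sub_0_r; ring|].
  simpl poch; simpl pow.
  replace (fact (n - b)) with ((n - b) * fact (n - S b))%nat in IH
    by (replace (n - b)%nat with (S (n - S b)) by lia; reflexivity).
  rewrite mult_INR, minus_INR in IH by lia.
  transitivity (-1 * ((-1) ^ b * INR (fact n))); [rewrite <- IH by lia|]; ring.
Qed.

Lemma poch_INR s k : poch (INR (s + 1)) k * INR (fact s) = INR (fact (s + k)).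
Proof.
  induction k as [|k IH]; [simpl; rewrite Nat.add_0_r; ring|].
  cbn [poch]; replace (s + S k)%nat with (S (s + k)) by lia; rewrite fact_simpl, mult_INR, <- IH, S_INR, !plus_INR; simpl; ring.
Qed.

(* [phi t] is [φ(x) = (2 + x) e^(-t(1+x))]; the equation [V = y φ(V)] says [ξ_2t(1 + V) = y]. *)
Definition phi (t : R) : fps := fps_mul (fps_lin 2 1) (fps_scal (exp (- t)) (fps_exp (- t))).

Section Phi.

Variable t : R.

Lemma fps_pow_phi j : fps_pow (phi t) j =
  fps_scal (exp (- t) ^ j) (fps_mul (fps_pow (fps_lin 2 1) j) (fps_exp (INR j * - t))).
Proof. unfold phi; rewrite fps_pow_mul, fps_pow_scal, fps_pow_exp, fps_mul_scal_r; reflexivity. Qed.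

Lemma phi_0 : phi t 0%nat <> 0.
Proof.
  unfold phi, fps_mul, fps_lin, fps_scal, fps_exp; simpl.
  assert (exp (- t) > 0) by apply exp_pos; nra.
Qed.

Lemma fps_pow_phi_laguerre n p : fps_pow (phi t) (n + p) n =
  2 ^ p * exp (- INR (n + p) * t) * Laguerre n (INR p) (2 * INR (n + p) * t).
Proof.
  rewrite fps_pow_phi; unfold fps_scal, fps_mul, Laguerre; rewrite exp_pow_INR, sum_rev.
  replace (INR (n + p) * - t) with (- INR (n + p) * t) by ring.
  rewrite <- !sum_mult_l; apply sum_eq; intros b Hb.
  rewrite fps_pow_lin; unfold fps_exp, binom.
  replace (n - (n - b))%nat with b by lia.
  replace (n + p - (n - b))%nat with (p + b)%nat by lia.
  rewrite (proj2 (Nat.leb_le (n - b) (n + p))) by lia; unfold Binomial.C.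
  replace (n + p - (n - b))%nat with (p + b)%nat by lia.
  assert (H1 := poch_opp_INR n b Hb).
  assert (H2 := poch_INR (p + b) (n - b)).
  replace (p + b + (n - b))%nat with (n + p)%nat in H2 by lia.
  replace (INR p + INR b + 1) with (INR (p + b + 1)) by (rewrite !plus_INR; simpl; ring).
  assert (Hf1 := INR_fact_neq_0 (n - b)); assert (Hf2 := INR_fact_neq_0 (p + b)).
  assert (Hf3 := INR_fact_neq_0 b); assert (Hf4 := INR_fact_neq_0 n).
  apply (Rmult_eq_reg_r (INR (fact (n - b)) * INR (fact (p + b)))); [|apply Rmult_integral_contrapositive; auto].
  transitivity (2 ^ p * exp (- INR (n + p) * t) * / INR (fact n) *
    ((poch (- INR n) b * INR (fact (n - b))) / INR (fact b) *
     (poch (INR (p + b + 1)) (n - b) * INR (fact (p + b))) * (2 * INR (n + p) * t) ^ b));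
    [|field; auto].
  rewrite H1, H2, pow_add, !Rpow_mult_distr.
  replace (- INR (n + p)) with (-1 * INR (n + p)) by ring.
  rewrite Rpow_mult_distr, pow1; field; auto.
Qed.

Lemma fps_theta_lin a b : fps_theta (fps_lin a b) = fps_scal b fps_X.
Proof. fps_ext; unfold fps_theta, fps_lin, fps_scal, fps_X, fps_xmul, fps_one; do 2 (destruct n; simpl; try ring). Qed.

Lemma fps_theta_exp c : fps_theta (fps_exp c) = fps_scal c (fps_xmul (fps_exp c)).
Proof.
  fps_ext; unfold fps_theta, fps_scal, fps_xmul, fps_exp; destruct n; [simpl; ring|].
  rewrite fact_simpl, mult_INR; simpl pow.
  field; split; [apply INR_fact_neq_0 | apply not_0_INR; lia].
Qed.

Lemma fps_theta_phi :
  fps_theta (phi t) = fps_xmul (fps_add (fps_scal (exp (- t)) (fps_exp (- t))) (fps_scal (- t) (phi t))).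
Proof.
  unfold phi; rewrite fps_theta_mul, fps_theta_lin, fps_theta_scal, fps_theta_exp; unfold fps_X.
  repeat rewrite ?fps_mul_scal_l, ?fps_mul_scal_r, ?fps_mul_xmul_l, ?fps_mul_xmul_r, ?fps_mul_one_l.
  fps_ext; unfold fps_add, fps_scal, fps_xmul; destruct n; ring.
Qed.

(* [(2 + x) θ(φ^j) = j x (φ^j - t (2 + x) φ^j)], since [(2 + x) φ' = (1 - t(2 + x)) φ]. *)
Lemma fps_lin_theta_pow_phi j : fps_mul (fps_lin 2 1) (fps_theta (fps_pow (phi t) j)) =
  fps_scal (INR j) (fps_xmul (fps_add (fps_pow (phi t) j)
    (fps_scal (- t) (fps_mul (fps_lin 2 1) (fps_pow (phi t) j))))).
Proof.
  destruct j as [|j]; [simpl; rewrite fps_theta_one, fps_mul_zero_r; fps_ext; unfold fps_zero, fps_scal; ring|].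
  rewrite fps_theta_pow, fps_mul_scal_r; f_equal.
  rewrite fps_theta_phi, (fps_mul_comm (fps_pow (phi t) j)), <- fps_mul_assoc, fps_mul_xmul_r, fps_mul_xmul_l.
  f_equal; rewrite fps_mul_add_r.
  change (fps_mul (fps_lin 2 1) (fps_scal (exp (- t)) (fps_exp (- t)))) with (phi t).
  rewrite fps_mul_add_l, fps_mul_scal_r, fps_mul_scal_l, fps_mul_assoc; reflexivity.
Qed.

Lemma fps_pow_phi_coef_rec j k :
  2 * INR (S k) * fps_pow (phi t) j (S k) + INR k * fps_pow (phi t) j k =
  INR j * (1 - 2 * t) * fps_pow (phi t) j k - INR j * t * fps_xmul (fps_pow (phi t) j) k.
Proof.
  assert (H := f_equal (fun s => s (S k)) (fps_lin_theta_pow_phi j)); cbv beta in H.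
  rewrite !fps_mul_lin in H; unfold fps_add, fps_scal, fps_theta in H.
  unfold fps_xmul at 1 2 in H; lra.
Qed.

End Phi.

(** * The formal identity *)

Lemma fps_theta_inj a b : a 0%nat = b 0%nat -> fps_theta a = fps_theta b -> a = b.
Proof.
  intros H0 H; fps_ext; destruct n as [|n]; [exact H0|].
  apply (f_equal (fun s => s (S n))) in H; unfold fps_theta in H.
  apply (Rmult_eq_reg_l (INR (S n))); [exact H | apply not_0_INR; lia].
Qed.

(* [Vser t] is [V = K_2t - 1], the solution of [V = y φ(V)], written via Lagrange inversion;
   [Lser t p n = [x^(n-p)] φ^n] is [2^p e^(-nt) L_(n-p)^(p)(2nt)] by [fps_pow_phi_laguerre]. *)
Definition Vser (t : R) : fps :=
  fun n => match n with O => 0 | S k => fps_pow (phi t) (S k) k / INR (S k) end.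
Definition Lser (t : R) (p : nat) : fps :=
  fun n => if Nat.leb p n then fps_pow (phi t) n (n - p)%nat else 0.

Section FormalIdentity.

Variable t : R.

Lemma Vser_lagrange : forall k n, (k <= n)%nat ->
  INR n * fps_pow (Vser t) k n = INR k * fps_pow (phi t) n (n - k)%nat.
Proof.
  destruct (lagrange_inversion (phi t) (phi_0 t)) as [V [HV0 HV]].
  replace (Vser t) with V; [exact HV|].
  fps_ext; destruct n as [|n]; [exact HV0|].
  assert (H := HV 1%nat (S n) ltac:(lia)).
  change (fps_pow V 1) with (fps_mul V fps_one) in H.
  rewrite fps_mul_one_r, Rmult_1_l, Nat.sub_1_r in H; simpl pred in H.
  unfold Vser; rewrite <- H; field; apply not_0_INR; lia.
Qed.

Lemma Lser_lt p n : (n < p)%nat -> Lser t p n = 0.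
Proof. intro H; unfold Lser; destruct (Nat.leb_spec p n); [lia | reflexivity]. Qed.

Lemma fps_theta_pow_Vser p : (1 <= p)%nat -> fps_theta (fps_pow (Vser t) p) = fps_scal (INR p) (Lser t p).
Proof.
  intro Hp; fps_ext; unfold fps_theta, fps_scal, Lser.
  destruct (Nat.leb_spec p n); [apply Vser_lagrange; lia|].
  rewrite fps_pow_coef_lt by (reflexivity || lia); ring.
Qed.

Lemma fps_mul_pow_Vser_Lser1 p : fps_mul (fps_pow (Vser t) p) (Lser t 1) = Lser t (S p).
Proof.
  assert (H := fps_theta_pow (Vser t) p).
  rewrite fps_theta_pow_Vser in H by lia.
  replace (fps_theta (Vser t)) with (Lser t 1) in H.
  2:{ rewrite <- (fps_mul_one_r (Vser t)); change (fps_mul (Vser t) fps_one) with (fps_pow (Vser t) 1).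
      rewrite fps_theta_pow_Vser by lia; fps_ext; unfold fps_scal; simpl; ring. }
  fps_ext; apply (f_equal (fun s => s n)) in H; unfold fps_scal in H.
  apply (Rmult_eq_reg_l (INR (S p))); [lra | apply not_0_INR; lia].
Qed.

Lemma Lser_rec q n : (1 <= q)%nat ->
  INR n * (2 * Lser t q n + 2 * t * Lser t (q + 1) n + t * Lser t (q + 2) n) =
  2 * INR q * Lser t q n + INR (q + 1) * Lser t (q + 1) n.
Proof.
  intro Hq; destruct (le_lt_dec n q) as [Hnq|Hqn].
  - rewrite !(Lser_lt (q + _)) by lia.
    destruct (Nat.eq_dec n q) as [->|]; [ring | rewrite Lser_lt by lia; ring].
  - set (c := fps_pow (phi t) n); set (k := (n - q - 1)%nat).
    assert (Hn : n = (q + 1 + k)%nat) by (unfold k; lia).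
    assert (L0 : Lser t q n = c (S k)).
    { unfold Lser, c; destruct (Nat.leb_spec q n); [f_equal; lia | lia]. }
    assert (L1 : Lser t (q + 1) n = c k).
    { unfold Lser, c; destruct (Nat.leb_spec (q + 1) n); [f_equal; lia | lia]. }
    assert (L2 : Lser t (q + 2) n = fps_xmul c k).
    { unfold Lser, fps_xmul, c; destruct (Nat.leb_spec (q + 2) n), k as [|k'] eqn:Ek;
        [lia | f_equal; lia | reflexivity | lia]. }
    assert (Hrec := fps_pow_phi_coef_rec t n k); fold c in Hrec.
    replace (INR n) with (INR q + INR k + 1) in * by (rewrite Hn, !plus_INR; simpl; ring).
    rewrite L0, L1, L2, plus_INR, S_INR in *; simpl INR in *; lra.
Qed.

Theorem Vser_formal_identity m :
  fps_mul (fps_add (fps_add (fps_scal 2 fps_one) (fps_scal (2 * t) (Vser t)))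
                   (fps_scal t (fps_pow (Vser t) 2))) (Lser t (m + 1)) =
  fps_mul (fps_add (fps_scal 2 (Vser t)) (fps_pow (Vser t) 2)) (fps_pow (Vser t) m).
Proof.
  assert (HL : forall p, fps_mul (fps_pow (Vser t) p) (Lser t (m + 1)) = Lser t (p + m + 1)).
  { intro p; replace (Lser t (m + 1)) with (fps_mul (fps_pow (Vser t) m) (Lser t 1))
      by (rewrite fps_mul_pow_Vser_Lser1; f_equal; lia).
    rewrite <- fps_mul_assoc, <- fps_pow_add, fps_mul_pow_Vser_Lser1; f_equal; lia. }
  assert (HV : fps_mul (Vser t) (Lser t (m + 1)) = Lser t (1 + m + 1)).
  { rewrite <- HL; simpl fps_pow; rewrite fps_mul_one_r; reflexivity. }
  rewrite !fps_mul_add_l, !fps_mul_scal_l, fps_mul_one_l, HV, HL, <- fps_pow_add.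
  change (fps_mul (Vser t) (fps_pow (Vser t) m)) with (fps_pow (Vser t) (1 + m)).
  apply fps_theta_inj.
  - unfold fps_add, fps_scal; rewrite !Lser_lt, !fps_pow_coef_lt by (reflexivity || lia); ring.
  - rewrite !fps_theta_add, !fps_theta_scal, !fps_theta_pow_Vser by lia.
    replace (1 + m + 1)%nat with (m + 2)%nat by lia; replace (2 + m + 1)%nat with (m + 3)%nat by lia.
    replace (1 + m)%nat with (m + 1)%nat by lia; replace (2 + m)%nat with (m + 2)%nat by lia.
    fps_ext; unfold fps_add, fps_scal, fps_theta.
    assert (H := Lser_rec (m + 1) n ltac:(lia)).
    replace (m + 1 + 1)%nat with (m + 2)%nat in H by lia.
    replace (m + 1 + 2)%nat with (m + 3)%nat in H by lia.
    lra.
Qed.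

End FormalIdentity.

(** * Evaluation of absolutely summable series *)

Definition abs_summable (c : fps) (rho : R) : Prop :=
  ex_series (fun n => Rabs (c n) * rho ^ n).

Definition fps_eval (c : fps) (z : C) : C :=
  (Series (fun n => c n * fst (Cpow z n)), Series (fun n => c n * snd (Cpow z n))).

Lemma ex_series_Rabs_coef c z (proj : C -> R) :
  (forall w, Rabs (proj w) <= Cmod w) -> abs_summable c (Cmod z) ->
  ex_series (fun n => Rabs (c n * proj (Cpow z n))).
Proof.
  intros Hproj H; apply (@ex_series_le R_AbsRing R_CompleteNormedModule _ (fun n => Rabs (c n) * Cmod z ^ n)); [intro n | exact H].
  change (Rabs (Rabs (c n * proj (Cpow z n))) <= Rabs (c n) * Cmod z ^ n).
  rewrite Rabs_Rabsolu.
  rewrite Rabs_mult, <- Cmod_pow; apply Rmult_le_compat_l; [apply Rabs_pos | apply Hproj].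
Qed.

Lemma Rabs_fst_le_Cmod (w : C) : Rabs (fst w) <= Cmod w.
Proof. eapply Rle_trans; [apply Rmax_l | apply Rmax_Cmod]. Qed.

Lemma Rabs_snd_le_Cmod (w : C) : Rabs (snd w) <= Cmod w.
Proof. eapply Rle_trans; [apply Rmax_r | apply Rmax_Cmod]. Qed.

Lemma is_series_poly (a : nat -> R) D :
  (forall n, (D < n)%nat -> a n = 0) -> is_series a (sum_f_R0 a D).
Proof.
  intro H; change (is_lim_seq (sum_n a) (sum_f_R0 a D)).
  apply is_lim_seq_ext_loc with (fun _ => sum_f_R0 a D); [|apply is_lim_seq_const].
  exists D; intros n Hn; rewrite sum_n_Reals; symmetry; apply sum_widen; [lia|].
  intros i Hi; apply H; lia.
Qed.

Lemma is_series_Un_cv (a : nat -> R) l : is_series a l -> Un_cv (fun N => sum_f_R0 a N) l.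
Proof. intro H; apply is_lim_seq_Reals; eapply is_lim_seq_ext; [|exact H]; apply sum_n_Reals. Qed.

Lemma Csum_fst (f : nat -> C) N : fst (Csum f N) = sum_f_R0 (fun n => fst (f n)) N.
Proof. induction N; simpl; congruence. Qed.

Lemma Csum_snd (f : nat -> C) N : snd (Csum f N) = sum_f_R0 (fun n => snd (f n)) N.
Proof. induction N; simpl; congruence. Qed.

Section AbsSummable.

Variable rho : R.
Hypothesis rho_ge0 : 0 <= rho.

Lemma abs_summable_term_ge0 c n : 0 <= Rabs (c n) * rho ^ n.
Proof. apply Rmult_le_pos; [apply Rabs_pos | apply pow_le, rho_ge0]. Qed.

Lemma abs_summable_le a b :
  (forall n, Rabs (a n) * rho ^ n <= b n) -> ex_series b -> abs_summable a rho.
Proof.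
  intros H Hb; apply (@ex_series_le R_AbsRing R_CompleteNormedModule _ b); [intro n | exact Hb].
  change (Rabs (Rabs (a n) * rho ^ n) <= b n).
  rewrite Rabs_pos_eq by apply abs_summable_term_ge0; apply H.
Qed.

Lemma abs_summable_poly c D : (forall n, (D < n)%nat -> c n = 0) -> abs_summable c rho.
Proof.
  intro H; eexists; apply (is_series_poly _ D); intros n Hn; rewrite H by lia; rewrite Rabs_R0; ring.
Qed.

Lemma abs_summable_one : abs_summable fps_one rho.
Proof. apply (abs_summable_poly _ 0); intros [|n] Hn; [lia | reflexivity]. Qed.

Lemma abs_summable_bounded c K : rho < 1 -> (forall n, Rabs (c n) <= K) -> abs_summable c rho.
Proof.
  intros Hr H; apply (abs_summable_le _ (fun n => K * rho ^ n)).
  - intro n; apply Rmult_le_compat_r; [apply pow_le, rho_ge0 | apply H].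
  - assert (Hg := is_series_geom rho ltac:(rewrite Rabs_pos_eq; assumption)).
    eexists; apply (is_series_scal (K := R_AbsRing) K _ _ Hg).
Qed.

Lemma abs_summable_add a b :
  abs_summable a rho -> abs_summable b rho -> abs_summable (fps_add a b) rho.
Proof.
  intros [la Ha] [lb Hb]; apply (abs_summable_le _ (fun n => Rabs (a n) * rho ^ n + Rabs (b n) * rho ^ n)).
  - intro n; unfold fps_add; rewrite <- Rmult_plus_distr_r.
    apply Rmult_le_compat_r; [apply pow_le, rho_ge0 | apply Rabs_triang].
  - eexists; apply (is_series_plus _ _ _ _ Ha Hb).
Qed.

Lemma abs_summable_scal k a : abs_summable a rho -> abs_summable (fps_scal k a) rho.
Proof.
  intros [la Ha]; apply (abs_summable_le _ (fun n => Rabs k * (Rabs (a n) * rho ^ n))).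
  - intro n; unfold fps_scal; rewrite Rabs_mult; right; ring.
  - eexists; apply (is_series_scal (K := R_AbsRing) (Rabs k) _ _ Ha).
Qed.

Lemma abs_summable_mul a b :
  abs_summable a rho -> abs_summable b rho -> abs_summable (fps_mul a b) rho.
Proof.
  intros Ha Hb.
  assert (Habs : forall c, abs_summable c rho -> ex_series (fun n => Rabs (Rabs (c n) * rho ^ n)))
    by (intros c Hc; eapply ex_series_ext; [|exact Hc]; intro n; rewrite Rabs_pos_eq;
        [reflexivity | apply abs_summable_term_ge0]).
  assert (HM := is_series_mult _ _ _ _ (Series_correct _ Ha) (Series_correct _ Hb) (Habs a Ha) (Habs b Hb)).
  apply (abs_summable_le _ (fun n => sum_f_R0 (fun k =>
    Rabs (a k) * rho ^ k * (Rabs (b (n - k)%nat) * rho ^ (n - k)%nat)) n)); [|eexists; exact HM].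
  intro n; unfold fps_mul; eapply Rle_trans;
    [apply Rmult_le_compat_r; [apply pow_le, rho_ge0 | apply Rsum_abs]|].
  rewrite <- sum_mult_r; apply sum_Rle; intros i Hi; rewrite Rabs_mult.
  replace (rho ^ n) with (rho ^ i * rho ^ (n - i)) by (rewrite <- pow_add; f_equal; lia).
  right; ring.
Qed.

Lemma abs_summable_pow a k : abs_summable a rho -> abs_summable (fps_pow a k) rho.
Proof.
  intro Ha; induction k; simpl; [apply abs_summable_one | apply abs_summable_mul; assumption].
Qed.

End AbsSummable.

Section Evaluation.

Variable z : C.

Let re c n := c n * fst (Cpow z n).
Let im c n := c n * snd (Cpow z n).

Lemma is_series_re c : abs_summable c (Cmod z) -> is_series (re c) (fst (fps_eval c z)).
Proof. intro H; apply Series_correct, ex_series_Rabs, ex_series_Rabs_coef; [apply Rabs_fst_le_Cmod | exact H]. Qed.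

Lemma is_series_im c : abs_summable c (Cmod z) -> is_series (im c) (snd (fps_eval c z)).
Proof. intro H; apply Series_correct, ex_series_Rabs, ex_series_Rabs_coef; [apply Rabs_snd_le_Cmod | exact H]. Qed.

Lemma fps_eval_Cseries_cv c : abs_summable c (Cmod z) ->
  Cseries_cv (fun n => Cscal (c n) (Cpow z n)) (fps_eval c z).
Proof.
  intro H; split; (eapply Un_cv_ext; [intro N; symmetry; first [apply Csum_fst | apply Csum_snd]|]).
  - exact (is_series_Un_cv _ _ (is_series_re c H)).
  - exact (is_series_Un_cv _ _ (is_series_im c H)).
Qed.

Lemma fps_eval_mul a b : abs_summable a (Cmod z) -> abs_summable b (Cmod z) ->
  fps_eval (fps_mul a b) z = Cmult (fps_eval a z) (fps_eval b z).
Proof.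
  intros Ha Hb.
  assert (Hprod : forall f g l l', is_series f l -> is_series g l' ->
    ex_series (fun n => Rabs (f n)) -> ex_series (fun n => Rabs (g n)) ->
    is_series (fun n => sum_f_R0 (fun k => f k * g (n - k)%nat) n) (l * l')).
  { intros f g l l' Hf Hg Hf' Hg'; eapply is_series_ext; [|apply (is_series_mult f g l l' Hf Hg Hf' Hg')].
    intro n; reflexivity. }
  assert (ARa := ex_series_Rabs_coef a z fst Rabs_fst_le_Cmod Ha).
  assert (AIa := ex_series_Rabs_coef a z snd Rabs_snd_le_Cmod Ha).
  assert (ARb := ex_series_Rabs_coef b z fst Rabs_fst_le_Cmod Hb).
  assert (AIb := ex_series_Rabs_coef b z snd Rabs_snd_le_Cmod Hb).
  assert (RR := Hprod _ _ _ _ (is_series_re a Ha) (is_series_re b Hb) ARa ARb).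
  assert (II := Hprod _ _ _ _ (is_series_im a Ha) (is_series_im b Hb) AIa AIb).
  assert (RI := Hprod _ _ _ _ (is_series_re a Ha) (is_series_im b Hb) ARa AIb).
  assert (IR := Hprod _ _ _ _ (is_series_im a Ha) (is_series_re b Hb) AIa ARb).
  assert (Hsplit : forall n k, (k <= n)%nat -> Cpow z n = Cmult (Cpow z k) (Cpow z (n - k)%nat))
    by (intros n k Hk; rewrite <- Cpow_add_r; f_equal; lia).
  unfold fps_eval at 1, Cmult; f_equal; apply is_series_unique.
  - eapply is_series_ext; [|exact (is_series_minus _ _ _ _ RR II)]; intro n.
    unfold plus, opp, re, im, fps_mul; simpl.
    rewrite <- sum_opp, <- sum_plus, <- sum_mult_r; apply sum_eq; intros k Hk.
    rewrite (Hsplit n k Hk); simpl; ring.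
  - eapply is_series_ext; [|exact (is_series_plus _ _ _ _ RI IR)]; intro n.
    unfold plus, re, im, fps_mul; simpl.
    rewrite <- sum_plus, <- sum_mult_r; apply sum_eq; intros k Hk.
    rewrite (Hsplit n k Hk); simpl; ring.
Qed.

Lemma fps_eval_add a b : abs_summable a (Cmod z) -> abs_summable b (Cmod z) ->
  fps_eval (fps_add a b) z = Cplus (fps_eval a z) (fps_eval b z).
Proof.
  intros Ha Hb; unfold fps_eval at 1, Cplus; f_equal; apply is_series_unique.
  - eapply is_series_ext; [|exact (is_series_plus _ _ _ _ (is_series_re a Ha) (is_series_re b Hb))].
    intro n; unfold re, fps_add, plus; simpl; ring.
  - eapply is_series_ext; [|exact (is_series_plus _ _ _ _ (is_series_im a Ha) (is_series_im b Hb))].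
    intro n; unfold im, fps_add, plus; simpl; ring.
Qed.

Lemma fps_eval_scal k a : abs_summable a (Cmod z) -> fps_eval (fps_scal k a) z = Cmult (RtoC k) (fps_eval a z).
Proof.
  intros Ha; unfold fps_eval at 1, Cmult, RtoC; simpl; f_equal; apply is_series_unique.
  - rewrite Rmult_0_l, Rminus_0_r.
    eapply is_series_ext; [|exact (is_series_scal (K := R_AbsRing) k _ _ (is_series_re a Ha))].
    intro n; unfold re, fps_scal, scal; simpl; unfold mult; simpl; ring.
  - rewrite Rmult_0_l, Rplus_0_r.
    eapply is_series_ext; [|exact (is_series_scal (K := R_AbsRing) k _ _ (is_series_im a Ha))].
    intro n; unfold im, fps_scal, scal; simpl; unfold mult; simpl; ring.
Qed.

Lemma fps_eval_poly c D : (forall n, (D < n)%nat -> c n = 0) ->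
  fps_eval c z = Csum (fun n => Cscal (c n) (Cpow z n)) D.
Proof.
  intro H; unfold fps_eval; apply injective_projections; simpl;
    [rewrite Csum_fst | rewrite Csum_snd]; apply is_series_unique, is_series_poly;
    intros n Hn; simpl; rewrite H by lia; ring.
Qed.

End Evaluation.

Lemma fps_eval_one z : fps_eval fps_one z = RtoC 1.
Proof.
  rewrite (fps_eval_poly _ _ 0) by (intros [|n] Hn; [lia | reflexivity]).
  unfold Cscal, RtoC; apply injective_projections; simpl; ring.
Qed.

Lemma fps_eval_pow a z k :
  abs_summable a (Cmod z) -> fps_eval (fps_pow a k) z = Cpow (fps_eval a z) k.
Proof.
  intro Ha; induction k as [|k IH]; simpl; [apply fps_eval_one|].
  rewrite fps_eval_mul, IH; [reflexivity | exact Ha | apply abs_summable_pow; [apply Cmod_ge_0 | exact Ha]].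
Qed.

Lemma fps_eval_lin a b z : fps_eval (fps_lin a b) z = Cplus (RtoC a) (Cmult (RtoC b) z).
Proof.
  rewrite (fps_eval_poly _ _ 1) by (intros [|[|n]] Hn; [lia | lia | reflexivity]).
  unfold Cscal, Cplus, Cmult, RtoC; apply injective_projections; simpl; ring.
Qed.

(** * Cauchy's estimate for polynomials *)

Ltac cring := match goal with |- @eq _ ?a ?b => change (@eq C a b); ring end.

Lemma Csum_succ (f : nat -> C) n : Csum f (S n) = Cplus (Csum f n) (f (S n)).
Proof. reflexivity. Qed.

Lemma Csum_ext (f g : nat -> C) n : (forall i, (i <= n)%nat -> f i = g i) -> Csum f n = Csum g n.
Proof.
  intro H; induction n; simpl; [apply H; lia|].
  rewrite IHn, H by (intros; apply H || lia; lia); reflexivity.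
Qed.

Lemma Csum_plus (f g : nat -> C) n : Csum (fun i => Cplus (f i) (g i)) n = Cplus (Csum f n) (Csum g n).
Proof. induction n; [|rewrite !Csum_succ, IHn; cring]; reflexivity. Qed.

Lemma Csum_mult_l (c : C) (f : nat -> C) n : Csum (fun i => Cmult c (f i)) n = Cmult c (Csum f n).
Proof. induction n; [|rewrite !Csum_succ, IHn; cring]; reflexivity. Qed.

Lemma Csum_swap (g : nat -> nat -> C) n m :
  Csum (fun i => Csum (fun j => g i j) m) n = Csum (fun j => Csum (fun i => g i j) n) m.
Proof. induction n; [|rewrite Csum_succ, IHn, <- Csum_plus]; reflexivity. Qed.

Lemma Csum_zero (f : nat -> C) n : (forall i, (i <= n)%nat -> f i = RtoC 0) -> Csum f n = RtoC 0.
Proof.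
  intro H; induction n; [apply H; lia|].
  rewrite Csum_succ, IHn, H by (intros; apply H || lia; lia); cring.
Qed.

Lemma Csum_single (f : nat -> C) n k : (k <= n)%nat ->
  (forall i, (i <= n)%nat -> i <> k -> f i = RtoC 0) -> Csum f n = f k.
Proof.
  intros Hk H; induction n as [|n IH]; [replace k with 0%nat by lia; reflexivity|].
  rewrite Csum_succ; destruct (Nat.eq_dec k (S n)) as [->|].
  - rewrite Csum_zero by (intros; apply H; lia); cring.
  - rewrite IH, (H (S n)) by (lia || (intros; apply H; lia)); cring.
Qed.

Lemma Csum_Cmod_le (f : nat -> C) n : Cmod (Csum f n) <= sum_f_R0 (fun i => Cmod (f i)) n.
Proof.
  induction n; [simpl; lra|].
  rewrite Csum_succ, tech5; eapply Rle_trans; [apply Cmod_triangle | lra].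
Qed.

Lemma Csum_one n : Csum (fun _ => RtoC 1) n = RtoC (INR (S n)).
Proof.
  induction n; [reflexivity|]; rewrite Csum_succ, IHn, (S_INR (S n)).
  unfold RtoC, Cplus; simpl; f_equal; ring.
Qed.

Lemma Csum_geom (w : C) n :
  Cmult (Cminus w (RtoC 1)) (Csum (fun l => Cpow w l) n) = Cminus (Cpow w (S n)) (RtoC 1).
Proof.
  induction n; [simpl; cring|].
  rewrite Csum_succ, Cmult_plus_distr_l, IHn; simpl; cring.
Qed.

Lemma Csum_geom_root (w : C) n : w <> RtoC 1 -> Cpow w (S n) = RtoC 1 ->
  Csum (fun l => Cpow w l) n = RtoC 0.
Proof.
  intros H1 H2; assert (E := Csum_geom w n); rewrite H2 in E.
  assert (Hn : Cminus w (RtoC 1) <> RtoC 0).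
  { intro E2; apply H1; replace w with (Cplus (Cminus w (RtoC 1)) (RtoC 1)) by cring.
    rewrite E2; cring. }
  apply (f_equal (Cmult (Cinv (Cminus w (RtoC 1))))) in E.
  rewrite Cmult_assoc, Cinv_l, Cmult_1_l in E by exact Hn.
  rewrite E; cring.
Qed.

Definition root_unity (N : nat) : C := (cos (2 * PI / INR N), sin (2 * PI / INR N)).

Lemma root_unity_pow N l :
  Cpow (root_unity N) l = (cos (2 * PI * INR l / INR N), sin (2 * PI * INR l / INR N)).
Proof.
  induction l as [|l IH].
  - simpl; unfold Rdiv; rewrite !Rmult_0_r, !Rmult_0_l, cos_0, sin_0; reflexivity.
  - rewrite S_INR; simpl Cpow; rewrite IH; unfold root_unity, Cmult.
    replace (2 * PI * (INR l + 1) / INR N) with (2 * PI / INR N + 2 * PI * INR l / INR N)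
      by (unfold Rdiv; ring).
    rewrite cos_plus, sin_plus; simpl; f_equal; ring.
Qed.

Lemma Cmod_cos_sin a : Cmod (cos a, sin a) = 1.
Proof. unfold Cmod; simpl fst; simpl snd; rewrite <- sqrt_1; f_equal; rewrite <- (sin2_cos2 a); unfold Rsqr; ring. Qed.

Lemma Cmod_root_unity_pow N l : Cmod (Cpow (root_unity N) l) = 1.
Proof. rewrite root_unity_pow; apply Cmod_cos_sin. Qed.

Lemma root_unity_pow_N N : (N <> 0)%nat -> Cpow (root_unity N) N = RtoC 1.
Proof.
  intro H; rewrite root_unity_pow.
  replace (2 * PI * INR N / INR N) with (2 * PI) by (field; apply not_0_INR; exact H).
  rewrite cos_2PI, sin_2PI; reflexivity.
Qed.

Lemma root_unity_pow_neq_1 N m : (0 < m < 2 * N)%nat -> m <> N -> Cpow (root_unity N) m <> RtoC 1.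
Proof.
  intros Hm HmN E; rewrite root_unity_pow in E; injection E; intros _ Ec.
  assert (HN : 0 < INR N) by (apply lt_0_INR; lia).
  assert (HPI := PI_RGT_0).
  set (x := PI * INR m / INR N).
  replace (2 * PI * INR m / INR N) with (2 * x) in Ec by (unfold x; field; lra).
  rewrite cos_2a_sin in Ec.
  assert (Hx0 : 0 < x) by (apply Rdiv_lt_0_compat; [apply Rmult_lt_0_compat, lt_0_INR|]; lra || lia).
  assert (Hs : sin x <> 0).
  { destruct (lt_dec m N) as [Hlt|Hge].
    - assert (x < PI).
      { unfold x; apply (Rmult_lt_reg_r (INR N)); [exact HN|]; field_simplify; [|lra].
        assert (INR m < INR N) by (apply lt_INR; lia); nra. }
      assert (0 < sin x) by (apply sin_gt_0; lra); lra.
    - assert (PI < x).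
      { unfold x; apply (Rmult_lt_reg_r (INR N)); [exact HN|]; field_simplify; [|lra].
        assert (INR N < INR m) by (apply lt_INR; lia); nra. }
      assert (x < 2 * PI).
      { unfold x; apply (Rmult_lt_reg_r (INR N)); [exact HN|]; field_simplify; [|lra].
        assert (INR m < 2 * INR N) by (rewrite <- (mult_INR 2); apply lt_INR; lia); nra. }
      assert (sin x < 0) by (apply sin_lt_0; lra); lra. }
  assert (sin x * sin x > 0) by (destruct (Rlt_or_le 0 (sin x)); nra).
  lra.
Qed.

Lemma Cscal_RtoC (x : R) (z : C) : Cscal x z = Cmult (RtoC x) z.
Proof. unfold Cscal, Cmult, RtoC; simpl; f_equal; ring. Qed.

(* Averaging the values of a polynomial over the circle [|z| = r] against [ω^(-kl)] extracts
   its [k]-th coefficient: all other powers of [ω] sum to [0]. *)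
Lemma root_unity_coef_extract (c : fps) D r k : (k <= D)%nat ->
  (forall n, (D < n)%nat -> c n = 0) ->
  Csum (fun l => Cmult (fps_eval c (Cmult (RtoC r) (Cpow (root_unity (S D)) l)))
                       (Cpow (root_unity (S D)) (l * (S D - k)))) D =
  RtoC (INR (S D) * (c k * r ^ k)).
Proof.
  intros Hk Hs; set (N := S D); set (w := root_unity N).
  assert (HwN : Cpow w N = RtoC 1) by (apply root_unity_pow_N; unfold N; lia).
  transitivity (Csum (fun l => Csum (fun i =>
    Cmult (RtoC (c i * r ^ i)) (Cpow (Cpow w (i + (N - k))) l)) D) D).
  - apply Csum_ext; intros l Hl; rewrite (fps_eval_poly _ c D) by exact Hs.
    rewrite Cmult_comm, <- Csum_mult_l; apply Csum_ext; intros i Hi.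
    rewrite Cscal_RtoC, Cpow_mult_l, <- RtoC_pow, <- !Cpow_mult_r.
    replace ((i + (N - k)) * l)%nat with (l * i + l * (N - k))%nat by ring.
    rewrite Cpow_add_r, RtoC_mult; cring.
  - rewrite Csum_swap.
    transitivity (Csum (fun i => Cmult (RtoC (c i * r ^ i))
      (Csum (fun l => Cpow (Cpow w (i + (N - k))) l) D)) D);
      [apply Csum_ext; intros; apply Csum_mult_l|].
    rewrite (Csum_single _ D k Hk).
    + replace (k + (N - k))%nat with N by (unfold N; lia).
      rewrite (Csum_ext _ (fun _ => RtoC 1)) by (intros; rewrite HwN; apply Cpow_1_l).
      rewrite Csum_one, <- RtoC_mult; f_equal; unfold N; ring.
    + intros i Hi Hik; rewrite Csum_geom_root; [cring | apply root_unity_pow_neq_1; unfold N; lia|].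
      rewrite <- Cpow_mult_r, Nat.mul_comm, Cpow_mult_r; fold N; rewrite HwN; apply Cpow_1_l.
Qed.

Lemma cauchy_estimate_poly (c : fps) D r B : 0 < r -> (forall n, (D < n)%nat -> c n = 0) ->
  (forall z : C, Cmod z = r -> Cmod (fps_eval c z) <= B) -> forall k, Rabs (c k) * r ^ k <= B.
Proof.
  intros Hr Hs HB k.
  destruct (le_lt_dec k D) as [Hk|Hk];
    [|rewrite Hs, Rabs_R0, Rmult_0_l by exact Hk;
      eapply Rle_trans; [apply Cmod_ge_0 | apply (HB (RtoC r)); rewrite Cmod_R; apply Rabs_pos_eq; lra]].
  set (w := root_unity (S D)).
  assert (Hterm : forall l, Cmod (Cmult (fps_eval c (Cmult (RtoC r) (Cpow w l))) (Cpow w (l * (S D - k)))) <= B).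
  { intro l; unfold w; rewrite Cmod_mult, Cmod_root_unity_pow, Rmult_1_r; apply HB.
    rewrite Cmod_mult, Cmod_root_unity_pow, Cmod_R, Rabs_pos_eq; lra. }
  assert (Hbd := Csum_Cmod_le (fun l => Cmult (fps_eval c (Cmult (RtoC r) (Cpow w l))) (Cpow w (l * (S D - k)))) D).
  unfold w in Hbd; rewrite root_unity_coef_extract, Cmod_R in Hbd by assumption.
  assert (Hsum := sum_Rle _ (fun _ => B) D (fun l _ => Hterm l)); rewrite sum_cte in Hsum.
  rewrite !Rabs_mult, Rabs_pos_eq, (Rabs_pos_eq (r ^ k)) in Hbd by (apply pos_INR || (apply pow_le; lra)).
  fold w in Hbd; assert (0 < INR (S D)) by (apply lt_0_INR; lia); nra.
Qed.

(** * Bounds on the coefficients of [φ^j] *)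

Lemma is_lim_seq_inv_INR : is_lim_seq (fun M => / INR M) 0.
Proof. exact (is_lim_seq_inv _ _ is_lim_seq_INR ltac:(discriminate)). Qed.

Lemma binom_succ_r M q : binom M (S q) = binom M q * (INR M - INR q) / INR (S q).
Proof.
  destruct (le_lt_dec (S q) M).
  - unfold binom; rewrite !(proj2 (Nat.leb_le _ M)) by lia.
    rewrite Binomial.pascal_step3, minus_INR by lia; field; apply not_0_INR; lia.
  - rewrite (binom_gt M (S q)) by lia.
    destruct (Nat.eq_dec q M) as [->|]; [unfold Rminus; rewrite Rplus_opp_r | rewrite binom_gt by lia];
      unfold Rdiv; ring.
Qed.

Lemma is_lim_seq_binom q : is_lim_seq (fun M => binom M q / INR M ^ q) (/ INR (fact q)).
Proof.
  induction q as [|q IH].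
  - eapply is_lim_seq_ext; [|apply is_lim_seq_const]; intro M; simpl; rewrite binom_0; field.
  - assert (H2 : is_lim_seq (fun M => (1 - INR q * / INR M) / INR (S q)) (/ INR (S q))).
    { replace (/ INR (S q)) with ((1 - INR q * 0) / INR (S q)) by (field; apply not_0_INR; lia).
      apply (is_lim_seq_scal_r (fun M => 1 - INR q * / INR M) (/ INR (S q)) (1 - INR q * 0)).
      apply is_lim_seq_minus'; [apply is_lim_seq_const|].
      apply (is_lim_seq_scal_l _ (INR q) 0), is_lim_seq_inv_INR. }
    replace (/ INR (fact (S q))) with (/ INR (fact q) * / INR (S q))
      by (rewrite fact_simpl, mult_INR; field; split; [apply INR_fact_neq_0 | apply not_0_INR; lia]).
    eapply is_lim_seq_ext_loc; [|exact (is_lim_seq_mult' _ _ _ _ IH H2)].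
    exists 1%nat; intros M HM; rewrite binom_succ_r; simpl pow.
    field; repeat split; try apply pow_nonzero; apply not_0_INR; lia.
Qed.

Lemma is_lim_seq_pow_lin_coef q s :
  is_lim_seq (fun M => fps_pow (fps_lin 1 (- (s / INR M))) M q) (fps_exp (- s) q).
Proof.
  assert (H := is_lim_seq_scal_r _ ((- s) ^ q) _ (is_lim_seq_binom q)); simpl in H.
  unfold fps_exp; replace ((- s) ^ q / INR (fact q)) with (/ INR (fact q) * (- s) ^ q) by (unfold Rdiv; ring).
  eapply is_lim_seq_ext_loc; [|exact H].
  exists 1%nat; intros M HM; rewrite fps_pow_lin, pow1.
  replace (- (s / INR M)) with (- s * / INR M) by (unfold Rdiv; ring).
  rewrite Rpow_mult_distr, pow_inv; field; apply pow_nonzero, not_0_INR; lia.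
Qed.

Lemma is_lim_seq_sum (f : nat -> nat -> R) (g : nat -> R) k :
  (forall i, (i <= k)%nat -> is_lim_seq (fun M => f M i) (g i)) ->
  is_lim_seq (fun M => sum_f_R0 (f M) k) (sum_f_R0 g k).
Proof.
  intro H; induction k; simpl; [apply H; lia|].
  apply is_lim_seq_plus'; [apply IHk; intros; apply H | apply H]; lia.
Qed.

Lemma is_lim_seq_mul_pow_lin_coef a k s :
  is_lim_seq (fun M => fps_mul a (fps_pow (fps_lin 1 (- (s / INR M))) M) k) (fps_mul a (fps_exp (- s)) k).
Proof.
  apply (is_lim_seq_sum (fun M i => a i * fps_pow (fps_lin 1 (- (s / INR M))) M (k - i)%nat)).
  intros i Hi; apply (is_lim_seq_scal_l _ (a i) (fps_exp (- s) (k - i)%nat)), is_lim_seq_pow_lin_coef.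
Qed.

Lemma is_lim_seq_exp_div_INR d : is_lim_seq (fun M => exp (d * / INR M)) 1.
Proof.
  rewrite <- exp_0; apply is_lim_seq_continuous;
    [apply derivable_continuous_pt, derivable_pt_exp|].
  replace 0 with (d * 0) by ring; apply (is_lim_seq_scal_l _ d 0), is_lim_seq_inv_INR.
Qed.

Lemma fps_mul_coef_high a b A B n : (forall i, (A < i)%nat -> a i = 0) ->
  (forall i, (B < i)%nat -> b i = 0) -> (A + B < n)%nat -> fps_mul a b n = 0.
Proof.
  intros Ha Hb Hn; unfold fps_mul; apply sum_eq_R0; intros i Hi.
  destruct (le_lt_dec i A); [rewrite Hb | rewrite Ha]; (ring || lia).
Qed.

Lemma fps_pow_lin_high a b M n : (M < n)%nat -> fps_pow (fps_lin a b) M n = 0.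
Proof. intro Hn; rewrite fps_pow_lin, binom_gt by exact Hn; ring. Qed.

(* On [|z| = r] with [r^2 = 2/t], [|2 + z|^2 = r^2 (1 + 2t(1 + Re z)) <= r^2 e^(2t(1 + Re z))],
   i.e. [|φ(z)| <= r]. *)
Definition phi_radius (t : R) : R := sqrt (2 / t).

Section CoefficientBound.

Variable t : R.
Hypothesis t_pos : 0 < t.

Let r := phi_radius t.

Lemma phi_radius_pos : 0 < r.
Proof. apply sqrt_lt_R0, Rdiv_lt_0_compat; lra. Qed.

Lemma Cmod_2_plus_le z : Cmod z = r -> Cmod (Cplus (RtoC 2) z) <= r * exp (t * (fst z + 1)).
Proof.
  intros Hz; apply Rsqr_incr_0_var;
    [rewrite !Rsqr_pow2 | apply Rmult_le_pos; [apply Rlt_le, phi_radius_pos | apply Rlt_le, exp_pos]].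
  assert (Hz2 := Cmod2_alt z); rewrite Hz in Hz2.
  assert (Hr2 : r ^ 2 = 2 / t) by (apply pow2_sqrt, Rlt_le, Rdiv_lt_0_compat; lra).
  rewrite Cmod2_alt, Rpow_mult_distr, exp_pow_INR.
  assert (E := exp_ineq1_le (INR 2 * (t * (Re z + 1)))); replace (INR 2) with 2 in * by reflexivity.
  destruct z as [x y]; unfold Cplus, RtoC, Re, Im in *; cbn [fst snd] in *.
  assert (HH : r ^ 2 * (1 + 2 * (t * (x + 1))) = 4 + 4 * x + r ^ 2) by (rewrite Hr2; field; lra).
  nra.
Qed.

Lemma Cmod_1_minus_le c z : Cmod (Cminus (RtoC 1) (Cmult (RtoC c) z)) <= exp (- c * fst z + c ^ 2 * Cmod z ^ 2 / 2).
Proof.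
  apply Rsqr_incr_0_var; [rewrite !Rsqr_pow2 | apply Rlt_le, exp_pos].
  rewrite Cmod2_alt, (Cmod2_alt z), exp_pow_INR.
  assert (E := exp_ineq1_le (INR 2 * (- c * Re z + c ^ 2 * (Re z ^ 2 + Im z ^ 2) / 2)));
    replace (INR 2) with 2 in * by reflexivity.
  destruct z as [x y]; unfold Cminus, Cplus, Copp, Cmult, RtoC, Re, Im in *; cbn [fst snd] in *.
  nra.
Qed.

Lemma phi_pow_approx_bound j k M : (1 <= M)%nat ->
  Rabs (fps_mul (fps_pow (fps_lin 2 1) j) (fps_pow (fps_lin 1 (- (t * INR j / INR M))) M) k) * r ^ k
  <= r ^ j * exp (t * INR j) * exp ((t * INR j) ^ 2 * r ^ 2 / 2 * / INR M).
Proof.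
  intro HM; set (s := t * INR j); set (cM := s / INR M).
  apply (cauchy_estimate_poly _ (j + M)); [apply phi_radius_pos | intros n Hn | intros z Hz].
  { apply (fps_mul_coef_high _ _ j M); [intros; apply fps_pow_lin_high; lia | intros; apply fps_pow_lin_high; lia | lia]. }
  assert (Hlin : forall a b, abs_summable (fps_lin a b) (Cmod z))
    by (intros a b; apply (abs_summable_poly _ _ 1); intros [|[|n]] Hn; [lia | lia | reflexivity]).
  rewrite fps_eval_mul, !fps_eval_pow, !fps_eval_lin, Cmod_mult, !Cmod_pow
    by (apply Hlin || (apply abs_summable_pow; [apply Cmod_ge_0 | apply Hlin])).
  replace (Cplus (RtoC 2) (Cmult (RtoC 1) z)) with (Cplus (RtoC 2) z) by cring.
  replace (Cplus (RtoC 1) (Cmult (RtoC (- cM)) z)) with (Cminus (RtoC 1) (Cmult (RtoC cM) z))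
    by (unfold Cminus, Cplus, Copp, Cmult, RtoC; simpl; f_equal; ring).
  assert (B1 := Cmod_2_plus_le z Hz); assert (B2 := Cmod_1_minus_le cM z); rewrite Hz in B2.
  eapply Rle_trans.
  { apply Rmult_le_compat; try (apply pow_le, Cmod_ge_0);
      apply pow_incr; split; [apply Cmod_ge_0 | eassumption | apply Cmod_ge_0 | eassumption]. }
  rewrite Rpow_mult_distr, !exp_pow_INR, Rmult_assoc, Rmult_assoc, <- !exp_plus.
  right; do 2 f_equal; unfold cM, s; field; apply not_0_INR; lia.
Qed.

Lemma fps_pow_phi_coef_bound j k : (k <= j)%nat -> Rabs (fps_pow (phi t) j k) <= r ^ (j - k).
Proof.
  intro Hkj; set (s := t * INR j).
  set (a := fps_mul (fps_pow (fps_lin 2 1) j) (fps_exp (- s)) k).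
  assert (Hlim := is_lim_seq_mul_pow_lin_coef (fps_pow (fps_lin 2 1) j) k s); fold a in Hlim.
  assert (Hlhs := is_lim_seq_scal_r _ (r ^ k) (Rabs a) (is_lim_seq_abs _ a Hlim)).
  assert (Hrhs := is_lim_seq_scal_l _ (r ^ j * exp s) 1 (is_lim_seq_exp_div_INR (s ^ 2 * r ^ 2 / 2))).
  assert (Hle := is_lim_seq_le_loc _ _ _ _ (ex_intro _ 1%nat (phi_pow_approx_bound j k)) Hlhs Hrhs).
  simpl in Hle; rewrite Rmult_1_r in Hle.
  assert (Hphi : fps_pow (phi t) j k = exp (- s) * a).
  { rewrite fps_pow_phi; unfold fps_scal, a, s; rewrite exp_pow_INR; do 3 f_equal; ring. }
  rewrite Hphi, Rabs_mult, Rabs_pos_eq by apply Rlt_le, exp_pos.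
  assert (Hr := phi_radius_pos).
  apply (Rmult_le_reg_r (r ^ k)); [apply pow_lt; exact Hr|].
  rewrite <- pow_add, Nat.sub_add by exact Hkj.
  apply (Rmult_le_reg_l (exp s)); [apply exp_pos|].
  rewrite <- Rmult_assoc, <- Rmult_assoc, <- exp_plus, Rplus_opp_r, exp_0, Rmult_1_l; lra.
Qed.

Lemma Vser_bound n : Rabs (Vser t n) <= r.
Proof.
  assert (Hr := phi_radius_pos).
  unfold Vser; destruct n as [|n]; [rewrite Rabs_R0; lra|].
  assert (H := fps_pow_phi_coef_bound (S n) n ltac:(lia)).
  replace (S n - n)%nat with 1%nat in H by lia; rewrite pow_1 in H.
  unfold Rdiv; rewrite Rabs_mult, Rabs_inv, (Rabs_pos_eq (INR (S n))) by apply pos_INR.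
  assert (1 <= INR (S n)) by (rewrite S_INR; assert (0 <= INR n) by apply pos_INR; lra).
  apply (Rmult_le_reg_r (INR (S n))); [lra|].
  rewrite Rmult_assoc, Rinv_l by lra; nra.
Qed.

Lemma Lser_bound p n : Rabs (Lser t p n) <= r ^ p.
Proof.
  unfold Lser; destruct (Nat.leb_spec p n).
  - replace p with (n - (n - p))%nat at 2 by lia; apply fps_pow_phi_coef_bound; lia.
  - rewrite Rabs_R0; apply pow_le, Rlt_le, phi_radius_pos.
Qed.

End CoefficientBound.

(** * Evaluation at [y] *)

Lemma Cseries_cv_unique a S1 S2 : Cseries_cv a S1 -> Cseries_cv a S2 -> S1 = S2.
Proof.
  intros [H1 H2] [H3 H4]; apply injective_projections; eapply UL_sequence; eassumption.
Qed.

Lemma Cseries_cv_shift (b : nat -> C) L p : (forall j, (j < p)%nat -> b j = RtoC 0) ->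
  Cseries_cv b L -> Cseries_cv (fun n => b (n + p)%nat) L.
Proof.
  intros Hz [H1 H2].
  assert (Hsum : forall N, Csum (fun n => b (n + p)%nat) N = Csum b (N + p)).
  { induction N as [|N IH]; [|rewrite Csum_succ, IH; reflexivity].
    destruct p as [|p]; [reflexivity|].
    rewrite Nat.add_0_l, Csum_succ, (Csum_zero b p), Cplus_0_l by (intros; apply Hz; lia); reflexivity. }
  assert (Hshift : forall u l, Un_cv u l -> Un_cv (fun N => u (N + p)%nat) l)
    by (intros u l H eps He; destruct (H eps He) as [N HN]; exists N; intros n Hn; apply HN; lia).
  split; (eapply Un_cv_ext; [intro N; rewrite Hsum; reflexivity|]).
  - exact (Hshift (fun N => fst (Csum b N)) _ H1).
  - exact (Hshift (fun N => snd (Csum b N)) _ H2).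
Qed.

Lemma Cpow_Cscal c (y : C) j : Cpow (Cscal c y) j = Cscal (c ^ j) (Cpow y j).
Proof. rewrite !Cscal_RtoC, Cpow_mult_l, RtoC_pow; reflexivity. Qed.

Section EvaluationAtY.

Variable t : R.
Hypothesis t_pos : 0 < t.
Variable y : C.
Hypothesis y_in_disc : Cmod y < 1.

Lemma abs_summable_Vser : abs_summable (Vser t) (Cmod y).
Proof. apply (abs_summable_bounded _ (Cmod_ge_0 y) _ (phi_radius t)); [exact y_in_disc | apply Vser_bound, t_pos]. Qed.

Lemma abs_summable_Lser p : abs_summable (Lser t p) (Cmod y).
Proof. apply (abs_summable_bounded _ (Cmod_ge_0 y) _ (phi_radius t ^ p)); [exact y_in_disc | apply Lser_bound, t_pos]. Qed.

Lemma laguerre_series_cv m :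
  Cseries_cv (fun n => Cscal (Laguerre n (INR (m + 1)) (2 * INR (n + m + 1) * t))
                             (Cpow (Cscal (exp (- t)) y) (n + m + 1)))
             (fps_eval (fps_scal (/ 2 ^ (m + 1)) (Lser t (m + 1))) y).
Proof.
  set (c := fps_scal (/ 2 ^ (m + 1)) (Lser t (m + 1))).
  assert (Hc := fps_eval_Cseries_cv y c (abs_summable_scal _ (Cmod_ge_0 y) _ _ (abs_summable_Lser (m + 1)))).
  apply (Cseries_cv_shift _ _ (m + 1)) in Hc.
  2:{ intros j Hj; unfold c, fps_scal; rewrite Lser_lt by lia.
      unfold Cscal, RtoC; f_equal; ring. }
  replace (fun n => Cscal (Laguerre n (INR (m + 1)) (2 * INR (n + m + 1) * t))
                         (Cpow (Cscal (exp (- t)) y) (n + m + 1)))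
    with (fun n => Cscal (c (n + (m + 1))%nat) (Cpow y (n + (m + 1)))); [exact Hc|].
  apply functional_extensionality; intro n.
  replace (n + m + 1)%nat with (n + (m + 1))%nat by lia.
  unfold c, fps_scal, Lser; rewrite Cpow_Cscal, (proj2 (Nat.leb_le _ _)), Nat.add_sub by lia.
  rewrite fps_pow_phi_laguerre, exp_pow_INR.
  assert (H2 : 2 ^ (m + 1) <> 0) by (apply pow_nonzero; lra).
  replace (INR (n + (m + 1)) * - t) with (- INR (n + (m + 1)) * t) by ring.
  unfold Cscal; cbn [fst snd]; f_equal; field; exact H2.
Qed.

Ltac abs_summable_tac :=
  repeat first [ apply abs_summable_add | apply abs_summable_scal | apply abs_summable_mul
               | apply abs_summable_pow | apply abs_summable_one | apply abs_summable_Vser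
               | apply abs_summable_Lser | apply Cmod_ge_0 ].

Lemma K2t_eval : K2t t y = Cplus (RtoC 1) (fps_eval (Vser t) y).
Proof.
  set (k := fps_add fps_one (Vser t)).
  assert (Hk : abs_summable k (Cmod y)) by (unfold k; abs_summable_tac).
  assert (Hcv : Cseries_cv (Kterm t y) (fps_eval k y)).
  { replace (Kterm t y) with (fun n => Cscal (k n) (Cpow y n)); [exact (fps_eval_Cseries_cv y k Hk)|].
    apply functional_extensionality; intros [|n].
    - unfold k, fps_add, fps_one, Vser, Cscal, RtoC; apply injective_projections; simpl; ring.
    - unfold k, fps_add, fps_one, Vser, Kterm; f_equal.
      replace (fps_pow (phi t) (S n) n) with (fps_pow (phi t) (n + 1) n) by (f_equal; lia).
      rewrite fps_pow_phi_laguerre, Nat.add_1_r; simpl (INR 1).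
      field; apply not_0_INR; lia. }
  unfold K2t; rewrite (Cseries_cv_unique _ _ _ (epsilon_spec _ _ (ex_intro _ _ Hcv)) Hcv).
  unfold k; rewrite fps_eval_add, fps_eval_one by abs_summable_tac; reflexivity.
Qed.

Lemma fps_eval_Vser_identity m (U := fps_eval (Vser t) y) :
  Cmult (Cplus (Cplus (RtoC 2) (Cmult (RtoC (2 * t)) U)) (Cmult (RtoC t) (Cpow U 2)))
        (fps_eval (Lser t (m + 1)) y) =
  Cmult (Cplus (Cmult (RtoC 2) U) (Cpow U 2)) (Cpow U m).
Proof.
  assert (H := f_equal (fun s => fps_eval s y) (Vser_formal_identity t m)); cbv beta in H.
  rewrite !fps_eval_mul, !fps_eval_add, !fps_eval_scal, !fps_eval_pow, fps_eval_one in H by abs_summable_tac.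
  unfold U; rewrite <- H; cring.
Qed.

End EvaluationAtY.

(* [D(U) = 2 + 2tU + tU^2] cannot vanish here: it would force [U (2 + U) U^m = 0], but [D(0) = D(-2) = 2]. *)
Lemma formal_identity_solve (t : R) (U F : C) (m : nat) :
  Cmult (Cplus (Cplus (RtoC 2) (Cmult (RtoC (2 * t)) U)) (Cmult (RtoC t) (Cpow U 2))) F =
  Cmult (Cplus (Cmult (RtoC 2) U) (Cpow U 2)) (Cpow U m) ->
  F = Cmult (Cdiv (Cminus (Cmult (Cplus (RtoC 1) U) (Cplus (RtoC 1) U)) (RtoC 1))
                  (Cplus (Cmult (RtoC t) (Cmult (Cplus (RtoC 1) U) (Cplus (RtoC 1) U))) (RtoC (2 - t))))
            (Cpow (Cminus (Cplus (RtoC 1) U) (RtoC 1)) m).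
Proof.
  set (D := Cplus (Cplus (RtoC 2) (Cmult (RtoC (2 * t)) U)) (Cmult (RtoC t) (Cpow U 2))).
  intro H.
  assert (HD : D <> RtoC 0).
  { intro HD; rewrite HD, Cmult_0_l in H.
    assert (H2 : RtoC 2 <> RtoC 0) by (intro E; injection E; lra).
    destruct (classic (U = RtoC 0)) as [HU|HU].
    - apply H2; rewrite <- HD; unfold D; rewrite HU; simpl; ring.
    - destruct (classic (Cplus (RtoC 2) U = RtoC 0)) as [HU2|HU2].
      + assert (HU' : U = Copp (RtoC 2))
          by (replace U with (Cminus (Cplus (RtoC 2) U) (RtoC 2)) by ring; rewrite HU2; ring).
        apply H2; rewrite <- HD; unfold D; rewrite HU', RtoC_mult; simpl; ring.
      + apply (Cmult_neq_0 (Cmult U (Cplus (RtoC 2) U)) (Cpow U m));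
          [apply Cmult_neq_0; assumption | apply Cpow_nz; exact HU |].
        rewrite H; simpl; ring. }
  replace (Cplus (Cmult (RtoC t) (Cmult (Cplus (RtoC 1) U) (Cplus (RtoC 1) U))) (RtoC (2 - t)))
    with D by (unfold D; rewrite RtoC_minus, RtoC_mult; simpl; ring).
  apply (f_equal (Cmult (Cinv D))) in H; rewrite Cmult_assoc, Cinv_l, Cmult_1_l in H by exact HD.
  replace (Cminus (Cplus (RtoC 1) U) (RtoC 1)) with U by ring.
  rewrite H; unfold Cdiv; simpl; ring.
Qed.

(* Coquelicot shadows [Cmod], [RtoC], [Cpow], [Copp], [Cinv], [Cdiv] of [Defs]; restore the latter. *)
Import Defs.

Theorem mainTheorem6 (t : R) (ht : 0 < t) (m : nat) (hm : (1 <= m)%nat)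
  (y : Cplx) (hy : Cmod y < 1) :
  exists S : Cplx,
    (* S = sum_{j >= m+1} L_{j-m-1}^{(m+1)}(2jt) (e^{-t} y)^j, indexed by n = j-m-1 *)
    Cseries_cv
      (fun n => Cscal (Laguerre n (INR (m + 1)) (2 * INR (n + m + 1) * t))
                      (Cpow (Cscal (exp (- t)) y) (n + m + 1))) S /\
    Cscal (2 ^ (m + 1)) S =
    Cmul
      (Cdiv (Csub (Cmul (K2t t y) (K2t t y)) (RtoC 1))
            (Cadd (Cscal t (Cmul (K2t t y) (K2t t y))) (RtoC (2 - t))))
      (Cpow (Csub (K2t t y) (RtoC 1)) m).
Proof.
  (* The argument does not use [hm]: the identity holds for [m = 0] as well. *)
  exists (fps_eval (fps_scal (/ 2 ^ (m + 1)) (Lser t (m + 1))) y); split.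
  - exact (laguerre_series_cv t ht y hy m).
  - assert (H := fps_eval_Vser_identity t ht y hy m).
    rewrite (K2t_eval t ht y hy), !Cscal_RtoC, fps_eval_scal by (apply abs_summable_Lser; assumption).
    rewrite Cmult_assoc, <- RtoC_mult, Rinv_r, Cmult_1_l by (apply pow_nonzero; lra).
    exact (formal_identity_solve t _ _ m H).
Qed.
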